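(* Let $l^1 < l^2 < \dots < l^{S+1}$ be real numbers, let $g : [l^1, l^{S+1}] \to \mathbb{R}$ be continuous and also defined at $0$, and suppose that each interval $[l^s, l^{s+1}]$, $s \in \{1,\dots,S\}$, is either in $\check{S}$ ($g$ convex on $[l^s,l^{s+1}]$) or in $\hat{S}$ ($g$ concave on $[l^s,l^{s+1}]$). Let $\hat g : [l^1,l^{S+1}]\to\mathbb{R}$ be the piecewise-convex function equal to $g$ on intervals $[l^s,l^{s+1}]$ with $s\in\check S$, and equal to the secant $g(l^s) + \alpha^s (t - l^s)$ on intervals with $s \in \hat S$, where $\alpha^s = (g(l^{s+1}) - g(l^s))/(l^{s+1}-l^s)$. For $x \in [l^1, l^{S+1}]$ define $$\Phi(x) = \min \Big\{ \sum_{s\in\check S}\big( g(0) y^s + z^s\big) + \sum_{s \in \hat S}\big(\alpha^s x^s + (g(l^s) - \alpha^s l^s) y^s\big) \;:\; z^s \ge [g(x^s/y^s) - g(0)]\,y^s \ (s\in\check S),\ x = \sum_{s=1}^S x^s,\ l^s y^s \le x^s \le l^{s+1} y^s\ (s=1,\dots,S),\ \sum_{s=1}^S y^s = 1,\ y^s \ge 0 \Big\},$$ with the convention that when $y^s = 0$ (hence $x^s=0$) the perspective term $[g(x^s/y^s)-g(0)]y^s$ is $0$. Then $\Phi$ is the convex envelope of $\hat g$ on $[l^1,l^{S+1}]$; that is, the constraints of this continuous relaxation of the Multiple Choice Model describe the convex envelope of the (piecewise-convex) function.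
   Context: This is the continuous relaxation (binary variables $y^s$ relaxed to $y^s\ge 0$) of the Multiple Choice Model with perspective reformulation for a single univariate function $g$ in the Sequential Convex MINLP scheme: on intervals where $g$ is concave it is replaced by its secant (its convex envelope on that interval), and on intervals where $g$ is convex the perspective of $g(\cdot)-g(0)$ is used. The convex envelope of a function is the largest convex function lying below it. *)

From HB Require Import structures.
From mathcomp Require Import all_boot all_order all_algebra.
From mathcomp Require Import all_classical all_reals all_analysis.
Set Implicit Arguments. Unset Strict Implicit. Unset Printing Implicit Defensive.
Import Order.TTheory GRing.Theory Num.Theory.
Local Open Scope classical_set_scope.
Local Open Scope ring_scope.

Section Defs.
Variable R : realType.

Definition convex_on (f : R -> R) (a b : R) : Prop :=
  forall x y t : R, a <= x <= b -> a <= y <= b -> 0 <= t <= 1 ->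
    f (t * x + (1 - t) * y) <= t * f x + (1 - t) * f y.

Definition concave_on (f : R -> R) (a b : R) : Prop :=
  forall x y t : R, a <= x <= b -> a <= y <= b -> 0 <= t <= 1 ->
    t * f x + (1 - t) * f y <= f (t * x + (1 - t) * y).

Definition convex_envelope_on (f h : R -> R) (a b : R) : Prop :=
  [/\ convex_on h a b,
      (forall x, a <= x <= b -> h x <= f x) &
      (forall k : R -> R, convex_on k a b ->
         (forall x, a <= x <= b -> k x <= f x) ->
         forall x, a <= x <= b -> k x <= h x)].

Definition secant_slope (g : R -> R) (l : nat -> R) (s : nat) : R :=
  (g (l s.+1) - g (l s)) / (l s.+1 - l s).

Definition persp (g : R -> R) (y x : R) : R :=
  if y == 0 then 0 else (g (x / y) - g 0) * y.

(* Breakpoints are l 0 < l 1 < ... < l S (the paper's l^1 < ... < l^{S+1});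
   interval s : 'I_S is [l s, l s.+1]; cvx s = true iff s is in S-check
   (convex piece), cvx s = false iff s is in S-hat (concave piece). *)
Definition mcm_feasible (S : nat) (l : nat -> R) (g : R -> R)
    (cvx : 'I_S -> bool) (x : R) (xs ys zs : 'I_S -> R) : Prop :=
  [/\ (forall s : 'I_S, cvx s -> persp g (ys s) (xs s) <= zs s),
      x = \sum_(s < S) xs s,
      (forall s : 'I_S, l s * ys s <= xs s <= l s.+1 * ys s),
      \sum_(s < S) ys s = 1 &
      (forall s : 'I_S, 0 <= ys s)].

Definition mcm_objective (S : nat) (l : nat -> R) (g : R -> R)
    (cvx : 'I_S -> bool) (xs ys zs : 'I_S -> R) : R :=
  \sum_(s < S | cvx s) (g 0 * ys s + zs s)
  + \sum_(s < S | ~~ cvx s)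
      (secant_slope g l s * xs s + (g (l s) - secant_slope g l s * l s) * ys s).

Definition mcm_value (S : nat) (l : nat -> R) (g : R -> R)
    (cvx : 'I_S -> bool) (x : R) : R :=
  inf [set v : R | exists xs ys zs : 'I_S -> R,
         mcm_feasible l g cvx x xs ys zs /\ v = mcm_objective l g cvx xs ys zs].

End Defs.

(* Writing x^s = y^s t^s, a feasible point of the relaxation amounts to a
   mixture: weights y^s forming a probability vector and nodes t^s in
   [l^s, l^(s+1)] with sum_s y^s t^s = x, whose best objective is
   sum_s y^s ghat(t^s), because the perspective term is y^s (g(t^s) - g(0)) and
   the secant is affine. So Phi(x) is the least cost of a mixture of x, and this
   least cost is attained since mixtures form a compact set on which the cost is
   continuous. By Jensen's inequality every convex k below ghat satisfies
   k(x) <= sum_s y^s k(t^s) <= Phi(x); the one-node mixtures give Phi <= ghat;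
   and since ghat is convex on each piece, y ghat(t) is jointly convex in
   (y, y t), so mixing optimal mixtures of two points shows that Phi is convex. *)

From HB Require Import structures.
From mathcomp Require Import all_boot all_order all_algebra.
From mathcomp Require Import all_classical all_reals all_analysis.
From mathcomp Require Import ring lra.
Import Order.TTheory GRing.Theory Num.Theory numFieldNormedType.Exports.
Set Implicit Arguments. Unset Strict Implicit. Unset Printing Implicit Defensive.
Local Open Scope classical_set_scope.
Local Open Scope ring_scope.

Lemma inf_eq_min (R : realType) (E : set R) m : E m -> lbound E m -> inf E = m.
Proof.
move=> Em Elb; apply/le_anti/andP; split; last by apply: lb_le_inf => //; exists m.
by apply: ge_inf => //; exists m.
Qed.

Section ConvexOn.
Variable R : realType.
Implicit Types (a b x y t : R) (k : R -> R).

Lemma convex_comb_itv a b x y t : a <= x <= b -> a <= y <= b -> 0 <= t <= 1 ->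
  a <= t * x + (1 - t) * y <= b.
Proof.
move=> /andP[ax xb] /andP[ay yb] /andP[t0 t1]; apply/andP; split; nra.
Qed.

(* The mean is given existentially so that zero total weight needs no special case. *)
Lemma convex_on_mean2 k a b (w1 w2 p1 p2 : R) : convex_on k a b ->
  0 <= w1 -> 0 <= w2 -> a <= p1 <= b -> a <= p2 <= b ->
  exists m, [/\ a <= m <= b, (w1 + w2) * m = w1 * p1 + w2 * p2
              & (w1 + w2) * k m <= w1 * k p1 + w2 * k p2].
Proof.
move=> kcvx w1_ge0 w2_ge0 p1ab p2ab.
have [W0|W_neq0] := eqVneq (w1 + w2) 0.
  have [w1_0 w2_0] : w1 = 0 /\ w2 = 0 by split; lra.
  by exists p1; rewrite w1_0 w2_0 !(mul0r, addr0).
have W_gt0 : 0 < w1 + w2 by rewrite lt_def W_neq0 addr_ge0.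
pose t := w1 / (w1 + w2).
have t01 : 0 <= t <= 1.
  by rewrite /t divr_ge0 ?addr_ge0 //= ler_pdivrMr // mul1r lerDl.
have one_minus_t : 1 - t = w2 / (w1 + w2) by rewrite /t; field.
exists (t * p1 + (1 - t) * p2); split; first exact: convex_comb_itv.
- by rewrite one_minus_t /t; field.
- have -> : w1 * k p1 + w2 * k p2 = (w1 + w2) * (t * k p1 + (1 - t) * k p2).
    by rewrite one_minus_t /t; field.
  by rewrite ler_wpM2l ?(ltW W_gt0) ?kcvx.
Qed.

Lemma convex_on_mean k a b n (w p : 'I_n -> R) : convex_on k a b -> a <= b ->
  (forall i, 0 <= w i) -> (forall i, a <= p i <= b) ->
  exists m, [/\ a <= m <= b, (\sum_(i < n) w i) * m = \sum_(i < n) w i * p i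
              & (\sum_(i < n) w i) * k m <= \sum_(i < n) w i * k (p i)].
Proof.
move=> kcvx ab; elim: n w p => [|n IHn] w p w_ge0 pab.
  by exists a; rewrite !big_ord0 !mul0r ab lexx.
have [m' [m'ab m'E m'k]] := IHn _ _ (fun i => w_ge0 (widen_ord (leqnSn n) i))
                                    (fun i => pab (widen_ord (leqnSn n) i)).
have W'_ge0 : 0 <= \sum_(i < n) w (widen_ord (leqnSn n) i) by exact: sumr_ge0.
have [m [mab mE mk]] := convex_on_mean2 kcvx W'_ge0 (w_ge0 ord_max) m'ab (pab ord_max).
exists m; rewrite !big_ord_recr /=; split => //; first by rewrite mE m'E.
by apply: le_trans mk _; rewrite lerD2r.
Qed.

Lemma jensen k a b n (w p : 'I_n -> R) : convex_on k a b -> a <= b ->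
  (forall i, 0 <= w i) -> (forall i, a <= p i <= b) -> \sum_(i < n) w i = 1 ->
  k (\sum_(i < n) w i * p i) <= \sum_(i < n) w i * k (p i).
Proof.
move=> kcvx ab w_ge0 pab w1.
have [m [_ ]] := convex_on_mean kcvx ab w_ge0 pab.
by rewrite w1 !mul1r => <-.
Qed.

End ConvexOn.

Section Clamp.
Variable R : realType.
Implicit Types a b t : R.

Definition clamp a b t : R := Num.max a (Num.min t b).

Lemma continuous_clamp a b : continuous (clamp a b).
Proof.
move=> t; apply: (@continuous_max _ _ (cst a) (id \min cst b)).
  exact: cst_continuous.
by apply: continuous_min; [exact: cvg_id | exact: cst_continuous].
Qed.

Lemma clamp_itv a b t : a <= b -> a <= clamp a b t <= b.
Proof. by move=> ab; rewrite le_max lexx ge_max ab ge_min lexx orbT. Qed.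

Lemma clamp_id a b t : a <= t <= b -> clamp a b t = t.
Proof. by case/andP=> ta tb; rewrite /clamp (min_l tb) (max_r ta). Qed.

Lemma continuous_within_clamp (f : R -> R) a b : a <= b ->
  {within [set t | a <= t <= b], continuous f} -> continuous (f \o clamp a b).
Proof.
move=> ab /subspace_continuousP f_cont t.
apply: (@cvg_comp _ _ _ (clamp a b) f _
  (within [set t | a <= t <= b] (nbhs (clamp a b t)))); last exact: f_cont (clamp_itv t ab).
move=> W /= W_nbhs.
have := @continuous_clamp a b t [set u | a <= u <= b -> W u] W_nbhs.
by rewrite /= nbhs_simpl /=; apply: filterS => u Wu; apply: Wu; exact: clamp_itv.
Qed.

End Clamp.

Lemma continuous_sum (R : realType) (T : topologicalType) n (F : 'I_n -> T -> R) :
  (forall i, continuous (F i)) -> continuous (fun t => \sum_(i < n) F i t).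
Proof. by move=> F_cont; apply: continuous_big => //; exact: add_continuous. Qed.

Section Pairs.
Variables (R : realType) (n : nat).

Definition pairs := prod_topology (fun _ : 'I_n => (R * R)%type).

Lemma continuous_coord1 (i : 'I_n) : continuous (fun f : pairs => (f i).1).
Proof.
move=> f; apply: (@continuous_comp _ _ _ (fun f : pairs => f i) fst).
  exact: proj_continuous.
exact: cvg_fst.
Qed.

Lemma continuous_coord2 (i : 'I_n) : continuous (fun f : pairs => (f i).2).
Proof.
move=> f; apply: (@continuous_comp _ _ _ (fun f : pairs => f i) snd).
  exact: proj_continuous.
exact: cvg_snd.
Qed.

End Pairs.

Section MultipleChoiceModel.
Variables (R : realType) (S : nat) (l : nat -> R) (g ghat : R -> R) (cvx : 'I_S -> bool).
Hypothesis S_gt0 : (0 < S)%N.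
Hypothesis l_incr : forall i : nat, (i < S)%N -> l i < l i.+1.
Hypothesis g_cont : {within [set t : R | l 0%N <= t <= l S], continuous g}.
Hypothesis g_convex : forall s : 'I_S, cvx s -> convex_on g (l s) (l s.+1).

Lemma l_le i j : (i <= j <= S)%N -> l i <= l j.
Proof.
move=> /andP[ij jS].
have D_convex : {in [pred k | (k <= S)%N] &,
                   forall i j k, (i < k < j)%N -> (k <= S)%N}.
  by move=> i' j' _ j'S k /andP[_ kj]; exact: leq_trans (ltnW kj) j'S.
apply: (Order.NatMonotonyTheory.nondecn_inP D_convex) => //=.
- by move=> k _ kS; exact/ltW/l_incr.
- exact: leq_trans jS.
Qed.

Lemma l0_le_lS : l 0%N <= l S.
Proof. by apply: l_le; rewrite leq0n leqnn. Qed.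

Lemma piece_sub (s : 'I_S) : l 0%N <= l s /\ l s.+1 <= l S.
Proof. by split; apply: l_le; rewrite ?leq0n ?leqnn ?andbT // ltnW. Qed.

Lemma exists_piece x : l 0%N <= x <= l S -> exists s : 'I_S, l s <= x <= l s.+1.
Proof.
move=> /andP[l0x xlS].
suff : forall n, (n < S)%N -> x <= l n.+1 -> exists s : 'I_S, l s <= x <= l s.+1.
  by move/(_ S.-1); rewrite ltn_predL prednK //; apply.
elim=> [|n IHn] nS xln; first by exists (Ordinal nS); rewrite /= l0x.
have [xln'|xgt] := leP x (l n.+1); first exact: IHn (ltnW nS) xln'.
by exists (Ordinal nS); rewrite /= xln ltW.
Qed.

Definition gpiece (s : 'I_S) (t : R) : R :=
  if cvx s then g t else g (l s) + secant_slope g l s * (t - l s).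

Lemma gpiece_convex (s : 'I_S) : convex_on (gpiece s) (l s) (l s.+1).
Proof.
rewrite /gpiece; case s_cvx: (cvx s); first exact: g_convex.
by move=> x y t _ _ _; rewrite le_eqVlt; apply/predU1l; ring.
Qed.

(* Clamping extends the pieces continuously beyond [l 0, l S], where [g] need
   not be continuous. *)
Lemma continuous_gpiece_clamp (s : 'I_S) :
  continuous (gpiece s \o clamp (l 0%N) (l S)).
Proof.
rewrite /gpiece; case: (cvx s); first exact: continuous_within_clamp l0_le_lS g_cont.
pose c := clamp (l 0%N) (l S).
move=> t; apply: (@continuousD _ _ _ (cst (g (l s)))
                   (fun u => secant_slope g l s * (c u - l s))).
  exact: cst_continuous.
apply: (@continuousM _ _ (cst (secant_slope g l s)) (fun u => c u - l s)).
  exact: cst_continuous.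
apply: (@continuousB _ _ _ c (cst (l s))); first exact: continuous_clamp.
exact: cst_continuous.
Qed.

(* [(f s).1] is the weight [y^s] and [(f s).2] the node [x^s / y^s] (arbitrary
   when [y^s = 0]); the redundant bound [y^s <= 1] makes the set compact. *)
Definition mixture (x : R) : set (pairs R S) :=
  [set f | forall i : 'I_S, ([set y | 0 <= y <= 1] `*` [set t | l i <= t <= l i.+1]) (f i)]
  `&` [set f | \sum_(i < S) (f i).1 = 1]
  `&` [set f | \sum_(i < S) (f i).1 * (f i).2 = x].

Definition mixture_cost (f : pairs R S) : R := \sum_(i < S) (f i).1 * gpiece i (f i).2.

Lemma mixture_compact x : compact (mixture x).
Proof.
apply: compact_closedI; first apply: compact_closedI.
- apply: (@tychonoff _ (fun _ : 'I_S => (R * R)%type)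
           (fun i => [set y | 0 <= y <= 1] `*` [set t | l i <= t <= l i.+1])) => i.
  by apply: compact_setX; rewrite -set_itvcc; exact: segment_compact.
- exact: (proj1 (continuous_closedP _) (continuous_sum (@continuous_coord1 R S)) _ (@closed_eq _ 1)).
- have yt_cont i : continuous (fun f : pairs R S => (f i).1 * (f i).2).
    by move=> f; exact: continuousM (@continuous_coord1 _ _ i f) (@continuous_coord2 _ _ i f).
  exact: (proj1 (continuous_closedP _) (continuous_sum yt_cont) _ (@closed_eq _ x)).
Qed.

Lemma mixture_node_range x f (i : 'I_S) : mixture x f -> l 0%N <= (f i).2 <= l S.
Proof.
move=> [[f_box _] _]; have [_ /andP[li_le lSi_ge]] := f_box i.
by have [l0_le lS_ge] := piece_sub i; rewrite (le_trans l0_le) ?(le_trans lSi_ge).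
Qed.

Definition vertex (s : 'I_S) (x : R) : pairs R S :=
  fun i => if i == s then (1, x) else (0, l i).

Lemma vertex_mixture (s : 'I_S) x : l s <= x <= l s.+1 -> mixture x (vertex s x).
Proof.
move=> xs; split; first split.
- move=> i; rewrite /vertex; case: eqP => [->|_]; split => //=; rewrite ?ler01 ?lexx //.
  exact/ltW/l_incr.
- by rewrite /= (bigD1 s) //= /vertex eqxx big1 ?addr0 // => i /negbTE ->.
- rewrite /= (bigD1 s) //= /vertex eqxx mul1r big1 ?addr0 // => i /negbTE -> /=.
  exact: mul0r.
Qed.

Lemma mixture_cost_vertex (s : 'I_S) x : mixture_cost (vertex s x) = gpiece s x.
Proof.
rewrite /mixture_cost (bigD1 s) //= /vertex eqxx mul1r big1 ?addr0 // => i /negbTE -> /=.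
exact: mul0r.
Qed.

Lemma mixture_cost_attained x : l 0%N <= x <= l S ->
  exists2 c, mixture x c & forall f, mixture x f -> mixture_cost c <= mixture_cost f.
Proof.
move=> /exists_piece[s xs].
pose F (f : pairs R S) := \sum_(i < S) (f i).1 * (gpiece i \o clamp (l 0%N) (l S)) (f i).2.
have F_cont : continuous F.
  apply: continuous_sum => i f; apply: continuousM (@continuous_coord1 _ _ i f) _.
  apply: (@continuous_comp _ _ _ (fun f : pairs R S => (f i).2)).
    exact: continuous_coord2.
  exact: continuous_gpiece_clamp.
have FE f : mixture x f -> F f = mixture_cost f.
  by move=> fx; apply: eq_bigr => i _ /=; rewrite clamp_id // (mixture_node_range i fx).
have [c] := compact_EVT_min (ex_intro _ _ (vertex_mixture xs)) (@mixture_compact x)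
                            (continuous_subspaceT F_cont).
rewrite inE => cx cmin; exists c => // f fx.
by rewrite -!FE //; apply: cmin; rewrite inE.
Qed.

Lemma feasible_of_mixture x f : mixture x f ->
  exists xs ys zs : 'I_S -> R,
    mcm_feasible l g cvx x xs ys zs /\ mcm_objective l g cvx xs ys zs = mixture_cost f.
Proof.
move=> [[f_box f_sum1] f_mean].
exists (fun i => (f i).1 * (f i).2), (fun i => (f i).1),
  (fun i => persp g (f i).1 ((f i).1 * (f i).2)).
split; first split => // i.
- have [/andP[y_ge0 _] /andP[lt ut]] := f_box i.
  by rewrite !(mulrC _ (f i).1) !ler_wpM2l.
- by have [/andP[]] := f_box i.
rewrite /mcm_objective /mixture_cost [RHS](bigID cvx) /=; congr (_ + _).
  apply: eq_bigr => i i_cvx; rewrite /gpiece i_cvx /persp.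
  have [->|y_neq0] := eqVneq (f i).1 0; first by rewrite !mul0r mulr0 addr0.
  by rewrite (mulrC (f i).1 (f i).2) mulfK //; ring.
by apply: eq_bigr => i /negbTE i_cvx; rewrite /gpiece i_cvx; ring.
Qed.

Lemma mixture_of_feasible x xs ys zs : mcm_feasible l g cvx x xs ys zs ->
  exists2 f, mixture x f & mixture_cost f <= mcm_objective l g cvx xs ys zs.
Proof.
move=> [z_ge x_sum xy_itv y_sum1 y_ge0].
have y_le1 i : ys i <= 1.
  rewrite -y_sum1 (bigD1 i) //= lerDl; exact: sumr_ge0.
have x_eq0 i : ys i = 0 -> xs i = 0.
  by move=> y0; have := xy_itv i; rewrite y0 !mulr0 => /le_anti.
exists (fun i => (ys i, if ys i == 0 then l i else xs i / ys i)).
  split; first split.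
  - move=> i; split; first by rewrite /= y_ge0 y_le1.
    rewrite /=; have [_|y_neq0] := eqVneq (ys i) 0; first by rewrite lexx; exact/ltW/l_incr.
    have y_gt0 : 0 < ys i by rewrite lt_def y_neq0 y_ge0.
    by rewrite ler_pdivlMr // ler_pdivrMr.
  - exact: y_sum1.
  - rewrite /= x_sum; apply: eq_bigr => i _ /=.
    have [y0|y_neq0] := eqVneq (ys i) 0; first by rewrite y0 mul0r x_eq0.
    by rewrite mulrC divfK.
rewrite /mcm_objective /mixture_cost [leLHS](bigID cvx) /=.
apply: lerD; apply: ler_sum => i i_cvx; rewrite /gpiece ?i_cvx ?(negbTE i_cvx) /=.
  have := z_ge i i_cvx; rewrite /persp.
  have [y0|y_neq0] := eqVneq (ys i) 0; first by rewrite y0 !mul0r mulr0 add0r.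
  lra.
have [y0|y_neq0] := eqVneq (ys i) 0; first by rewrite y0 x_eq0 // !mul0r !mulr0 addr0.
by rewrite le_eqVlt; apply/predU1l; field.
Qed.

Lemma mcm_valueE x c : mixture x c ->
  (forall f, mixture x f -> mixture_cost c <= mixture_cost f) ->
  mcm_value l g cvx x = mixture_cost c.
Proof.
move=> cx c_min; apply: inf_eq_min.
  by have [xs [ys [zs [feas obj]]]] := feasible_of_mixture cx; exists xs, ys, zs.
move=> _ [xs [ys [zs [feas ->]]]].
have [f fx f_le] := mixture_of_feasible feas.
exact: le_trans (c_min f fx) f_le.
Qed.

Lemma mixture_conv x1 x2 lam f1 f2 : 0 <= lam <= 1 -> mixture x1 f1 -> mixture x2 f2 ->
  exists2 f, mixture (lam * x1 + (1 - lam) * x2) f &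
    mixture_cost f <= lam * mixture_cost f1 + (1 - lam) * mixture_cost f2.
Proof.
move=> lam01 [[box1 sum1] mean1] [[box2 sum2] mean2].
have /andP[lam_ge0 lam_le1] := lam01.
have lam'_ge0 : 0 <= 1 - lam by rewrite subr_ge0.
pose y i := lam * (f1 i).1 + (1 - lam) * (f2 i).1.
have node_i (i : 'I_S) : exists t, [/\ l i <= t <= l i.+1,
    y i * t = lam * ((f1 i).1 * (f1 i).2) + (1 - lam) * ((f2 i).1 * (f2 i).2)
  & y i * gpiece i t <=
      lam * ((f1 i).1 * gpiece i (f1 i).2) + (1 - lam) * ((f2 i).1 * gpiece i (f2 i).2)].
  have [/andP[y1_ge0 _] t1_itv] := box1 i; have [/andP[y2_ge0 _] t2_itv] := box2 i.
  have [t [t_itv tE t_le]] := convex_on_mean2 (@gpiece_convex i)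
    (mulr_ge0 lam_ge0 y1_ge0) (mulr_ge0 lam'_ge0 y2_ge0) t1_itv t2_itv.
  by exists t; rewrite !mulrA.
have [t tP] := choice node_i.
exists (fun i => (y i, t i)).
  split; first split.
  - move=> i; have [t_itv _ _] := tP i; split => //=.
    by apply: convex_comb_itv; [case: (box1 i) | case: (box2 i) | ].
  - by rewrite /= /y big_split /= -!mulr_sumr sum1 sum2 !mulr1 subrKC.
  - rewrite /=; under eq_bigr => i _ do case: (tP i) => _ -> _.
    by rewrite big_split /= -!mulr_sumr mean1 mean2.
apply: le_trans; first by apply: ler_sum => i _; case: (tP i) => _ _; exact.
by rewrite big_split /= -!mulr_sumr.
Qed.

Lemma mcm_value_attained x : l 0%N <= x <= l S ->
  exists xs ys zs : 'I_S -> R,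
    mcm_feasible l g cvx x xs ys zs /\
    mcm_objective l g cvx xs ys zs = mcm_value l g cvx x.
Proof.
move=> /mixture_cost_attained[c cx c_min].
by rewrite (mcm_valueE cx c_min); exact: feasible_of_mixture.
Qed.

Lemma mcm_value_convex : convex_on (mcm_value l g cvx) (l 0%N) (l S).
Proof.
move=> x1 x2 lam x1_in x2_in lam01.
have [c1 c1x c1_min] := mixture_cost_attained x1_in.
have [c2 c2x c2_min] := mixture_cost_attained x2_in.
have [c cx c_min] := mixture_cost_attained (convex_comb_itv x1_in x2_in lam01).
have [f fx f_le] := mixture_conv lam01 c1x c2x.
rewrite (mcm_valueE c1x c1_min) (mcm_valueE c2x c2_min) (mcm_valueE cx c_min).
exact: le_trans (c_min f fx) f_le.
Qed.

Hypothesis ghat_piece : forall (s : 'I_S) t, l s <= t <= l s.+1 -> ghat t = gpiece s t.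

Lemma mcm_value_le_ghat x : l 0%N <= x <= l S -> mcm_value l g cvx x <= ghat x.
Proof.
move=> x_in; have [s xs] := exists_piece x_in.
have [c cx c_min] := mixture_cost_attained x_in.
rewrite (mcm_valueE cx c_min) (ghat_piece xs) -mixture_cost_vertex.
exact/c_min/vertex_mixture.
Qed.

Lemma convex_minorant_le_mcm_value (k : R -> R) : convex_on k (l 0%N) (l S) ->
  (forall x, l 0%N <= x <= l S -> k x <= ghat x) ->
  forall x, l 0%N <= x <= l S -> k x <= mcm_value l g cvx x.
Proof.
move=> k_cvx k_le x x_in.
have [c cx c_min] := mixture_cost_attained x_in.
rewrite (mcm_valueE cx c_min); have [[c_box c_sum1] c_mean] := cx.
have y_ge0 i : 0 <= (c i).1 by case: (c_box i) => /andP[].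
rewrite -c_mean; apply: le_trans (jensen k_cvx l0_le_lS y_ge0 (fun i => mixture_node_range i cx) c_sum1) _.
apply: ler_sum => i _; rewrite ler_wpM2l //.
have [_ t_itv] := c_box i; rewrite -(ghat_piece t_itv).
exact/k_le/(mixture_node_range i cx).
Qed.

End MultipleChoiceModel.

Theorem corollary1 (R : realType) (S : nat) (l : nat -> R) (g ghat : R -> R)
    (cvx : 'I_S -> bool) :
  (0 < S)%N ->
  (forall i : nat, (i < S)%N -> l i < l i.+1) ->
  {within [set t : R | l 0%N <= t <= l S], continuous g} ->
  (forall s : 'I_S, cvx s -> convex_on g (l s) (l s.+1)) ->
  (forall s : 'I_S, ~~ cvx s -> concave_on g (l s) (l s.+1)) ->
  (forall (s : 'I_S) (t : R), l s <= t <= l s.+1 ->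
     ghat t = (if cvx s then g t
               else g (l s) + secant_slope g l s * (t - l s))) ->
  (forall x : R, l 0%N <= x <= l S ->
     exists xs ys zs : 'I_S -> R,
       mcm_feasible l g cvx x xs ys zs /\
       mcm_objective l g cvx xs ys zs = mcm_value l g cvx x) /\
  convex_envelope_on ghat (mcm_value l g cvx) (l 0%N) (l S).
Proof.
move=> S_gt0 l_incr g_cont g_convex _ ghat_piece.
split; first exact: mcm_value_attained.
split.
- exact: mcm_value_convex.
- exact: mcm_value_le_ghat.
- exact: convex_minorant_le_mcm_value.
Qed.
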